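(* Let $n\ge3$, let $\lambda_1,\dots,\lambda_{n-2}\in\mathbb{R}\setminus\{0\}$ and let $M^n_{\underline\lambda}=(\mathbb{R}^n,g_{\underline\lambda})$ with coordinates $(s,t,x_1,\dots,x_{n-2})$ and $g_{\underline\lambda}=2\,ds\,dt+\sum_{j=1}^{n-2}\lambda_jx_j^2\,ds^2+\sum_{j=1}^{n-2}dx_j^2$. Trivialize its (unique) spin structure by the global orthonormal frame $(\mathfrak a_{\bar0},\mathfrak a_0,\mathfrak a_1,\dots,\mathfrak a_{n-2})$ described in the context, so that spinor fields are smooth functions $M^n_{\underline\lambda}\to\Delta_{n,1}$. Then the space of parallel spinors of $M^n_{\underline\lambda}$ is $$\mathcal P(M_{\underline\lambda})=\{\varphi\in C^\infty(M_{\underline\lambda},\Delta_{n,1})\mid \varphi\equiv v \text{ constant with } v\in\Delta_V\},$$ where $\Delta_V=\{v\in\Delta_{n,1}\mid (e_2-e_1)\cdot v=0\}$. In particular $\dim_{\mathbb C}\mathcal P(M_{\underline\lambda})=\frac12\cdot2^{[n/2]}$.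
   Context: The global orthonormal frame is $\mathfrak a_{\bar0}=\partial_s-\frac12(\sum_j\lambda_jx_j^2+1)\partial_t$ (timelike), $\mathfrak a_0=\partial_s-\frac12(\sum_j\lambda_jx_j^2-1)\partial_t$, $\mathfrak a_j=\partial_{x_j}$ ($j=1,\dots,n-2$). $\Delta_{n,1}=\mathbb C^{2^{[n/2]}}$ is the complex spinor module of $\mathrm{Spin}(n,1)$, where the Clifford algebra is generated by an orthonormal basis $e_1,\dots,e_n$ of $\mathbb R^n$ with relations $e_ie_j+e_je_i=-2\varepsilon_j\delta_{ij}$, $\varepsilon_1=-1$, $\varepsilon_j=1$ for $j\ge2$. In the trivialization, Clifford multiplication by $\mathfrak a_{\bar0},\mathfrak a_0,\mathfrak a_j$ corresponds to the action of $e_1,e_2,e_{j+2}$ respectively; thus $e_2-e_1$ corresponds to the parallel isotropic field $V=\partial_t=\mathfrak a_0-\mathfrak a_{\bar0}$. A spinor field is parallel if $\nabla^S\varphi=0$ for the spinor derivative induced by the Levi-Civita connection. *)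

From HB Require Import structures.
From mathcomp Require Import all_boot all_order all_algebra.
From mathcomp Require Import all_classical all_reals all_analysis.
From mathcomp Require Import complex.

Set Implicit Arguments.
Unset Strict Implicit.
Unset Printing Implicit Defensive.

Import Order.TTheory GRing.Theory Num.Theory numFieldNormedType.Exports.
Local Open Scope ring_scope.
Local Open Scope complex_scope.

(* Points of M^n_lambda = R^n are row vectors p : 'rV[R]_n with coordinates
   (p_0, p_1, p_2, ..., p_{n-1}) = (s, t, x_1, ..., x_{n-2}).
   Indices of coordinates / frame vectors / Clifford generators are natural
   numbers (0-based):
     coordinate 0 = s, 1 = t, k+1 = x_k   (k = 1..n-2);
     frame vector 0 = a_{bar 0}, 1 = a_0, k+1 = a_k   (k = 1..n-2);
     Clifford generator E 0 = e_1, E 1 = e_2, E (k+1) = e_{k+2}. *)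

Section Geometry.
Variable R : realType.
Variable n : nat.
Variable lam : 'I_(n - 2) -> R.

Local Notation pt := 'rV[R]_n.

Definition coord_at (p : pt) (k : nat) : R :=
  if insub k is Some i then p ord0 i else 0.

Definition quadf (p : pt) : R :=
  \sum_(j < n - 2) lam j * (coord_at p j.+2) ^+ 2.

Definition gcoef (p : pt) (k l : nat) : R :=
  if (k == 0%N) && (l == 0%N) then quadf p
  else if ((k == 0%N) && (l == 1%N)) || ((k == 1%N) && (l == 0%N)) then 1
  else if (2 <= k)%N && (k == l) then 1
  else 0.

Definition gmx (p : pt) : 'M[R]_n := \matrix_(k, l) gcoef p k l.

Definition gdot (p : pt) (u w : pt) : R := (u *m gmx p *m w^T) ord0 ord0.

Definition ucoord (k : nat) : pt := \row_(i < n) (if val i == k then 1 else 0).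

Definition pder (k : nat) (h : pt -> R) (p : pt) : R := 'D_(ucoord k) h p.

Definition christoffel (m k l : 'I_n) (p : pt) : R :=
  2^-1 * \sum_(r < n)
    invmx (gmx p) m r *
      (pder k (fun q => gcoef q l r) p + pder l (fun q => gcoef q k r) p
       - pder r (fun q => gcoef q k l) p).

Definition lc_nabla (X : pt) (Y : pt -> pt) (p : pt) : pt :=
  \row_(m < n) ('D_X (fun q => Y q ord0 m) p +
    \sum_(k < n) \sum_(l < n) X ord0 k * Y p ord0 l * christoffel m k l p).

Definition frame (a : nat) (p : pt) : pt :=
  if a == 0%N then ucoord 0 - (2^-1 * (quadf p + 1)) *: ucoord 1
  else if a == 1%N then ucoord 0 - (2^-1 * (quadf p - 1)) *: ucoord 1
  else ucoord a.

Definition eps (a : nat) : R := if a == 0%N then -1 else 1.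

Definition conn_coef (X : pt) (a b : nat) (p : pt) : R :=
  gdot p (lc_nabla X (frame a) p) (frame b p).

End Geometry.

(* complex spinor module Delta_{n,1} = C^(2^[n/2]) *)
Definition spin_dim (n : nat) : nat := 2 ^ (n./2).

(* E : Clifford generators e_1..e_n acting on Delta_{n,1}:
   e_i e_j + e_j e_i = -2 eps_j delta_ij. *)
Definition clifford_rep (R : realType) (n : nat)
  (E : nat -> 'M[R[i]]_(spin_dim n)) : Prop :=
  forall a b : nat, (a < n)%N -> (b < n)%N ->
    E a *m E b + E b *m E a
    = ((-2 * eps R a * (if a == b then 1 else 0))%:C)%:M.

Definition cRe (R : realType) (z : R[i]) : R := mathcomp.real_closed.complex.Re z.
Definition cIm (R : realType) (z : R[i]) : R := mathcomp.real_closed.complex.Im z.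

Section Spinors.
Variable R : realType.
Variable n : nat.
Local Notation pt := 'rV[R]_n.
Local Notation N := (spin_dim n).
Local Notation spinor := 'cV[R[i]]_N.

Definition smoothR (h : pt -> R) : Prop :=
  forall (vs : seq pt) (p : pt),
    differentiable (foldr (fun (v : pt) (g : pt -> R) => 'D_v g) h vs) p.

Definition smooth_spinor (phi : pt -> spinor) : Prop :=
  forall r : 'I_N,
    smoothR (fun q => cRe (phi q r ord0)) /\ smoothR (fun q => cIm (phi q r ord0)).

Definition spinor_dir (X : pt) (phi : pt -> spinor) (p : pt) : spinor :=
  \col_(r < N) (('D_X (fun q => cRe (phi q r ord0)) p)%:C
              + 'i * ('D_X (fun q => cIm (phi q r ord0)) p)%:C)%C.

(* spinor derivative induced by Levi-Civita, in the frame trivialization: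
   nabla^S_X phi = X(phi) + 1/2 sum_{a<b} eps_a eps_b g(nabla_X a_a, a_b) e_a e_b phi *)
Definition spinor_nabla (lam : 'I_(n - 2) -> R) (E : nat -> 'M[R[i]]_N)
  (X : pt) (phi : pt -> spinor) (p : pt) : spinor :=
  spinor_dir X phi p +
  \sum_(a < n) \sum_(b < n | (a < b)%N)
     ((2^-1 * eps R a * eps R b * conn_coef lam X a b p)%:C)%C
       *: (E a *m E b *m phi p).

Definition parallel_spinor (lam : 'I_(n - 2) -> R) (E : nat -> 'M[R[i]]_N)
  (phi : pt -> spinor) : Prop :=
  forall (p X : pt), spinor_nabla lam E X phi p = 0.

End Spinors.

From HB Require Import structures.
From mathcomp Require Import all_boot all_order all_algebra.
From mathcomp Require Import all_classical all_reals all_analysis.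
From mathcomp Require Import complex.
From mathcomp Require Import ring lra zify.
Import Order.TTheory GRing.Theory Num.Theory numFieldNormedType.Exports.

Set Implicit Arguments.
Unset Strict Implicit.
Unset Printing Implicit Defensive.

Local Open Scope ring_scope.
Local Open Scope complex_scope.
Local Open Scope classical_set_scope.

(* In the frame trivialisation the Levi-Civita connection only sees the potential
   f = sum_j lam_j x_j^2 through its differential, and only in the direction d_s:
     nabla^S_X phi = X(phi) - (X_s / 4) sum_b (d_b f) (e_2 - e_1) e_b phi.
   A parallel spinor is therefore constant on the hypersurfaces s = const, so its
   s-derivatives at p and at p + d_{x_1} agree. The two connection terms then differ
   by (lam_1 / 2) (e_2 - e_1) e_3 phi, which must vanish; as e_3 anticommutes with
   e_2 - e_1 and is invertible, (e_2 - e_1) phi = 0. Then the connection term vanishes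
   identically and phi is constant; conversely such constants are parallel.
   Finally e_2 - e_1 squares to 0 while its anticommutator with e_1 is the invertible
   scalar -2, which forces its rank to be exactly half of 2^[n/2]. *)

Lemma mxrank_sqr0_anticomm (F : fieldType) m (A B : 'M[F]_m) (c : F) :
  c != 0 -> A *m A = 0 -> A *m B + B *m A = c%:M -> (\rank A).*2 = m.
Proof.
move=> c_neq0 AA0 ABc; set r := \rank A.
have le_rm : (r + r - m <= 0)%N by rewrite -(mxrank0 F m m) -AA0 mxrank_mul_min.
have le_mr : (m <= r + r)%N.
  rewrite -{1}(mxrank1 F m) -(mxrank_scale_nz _ c_neq0) scalemx1 -ABc.
  apply: leq_trans (mxrank_add _ _) _.
  by rewrite leq_add ?mxrankM_maxl ?mxrankM_maxr.
by rewrite -addnn; lia.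
Qed.

Section CliffordGenerators.
Variables (R : realType) (n : nat) (E : nat -> 'M[R[i]]_(spin_dim n)).
Hypothesis hE : clifford_rep E.

Lemma cliff_anticomm a b : (a < n)%N -> (b < n)%N -> a != b ->
  E a *m E b = - (E b *m E a).
Proof.
move=> an bn ab; apply/eqP; rewrite -addr_eq0 hE // (negPf ab).
by rewrite mulr0 rmorph0.
Qed.

Lemma cliff_sqr a : (a < n)%N -> E a *m E a = (- eps R a)%:C%:M.
Proof.
move=> an; apply: (@scalemx_inj _ _ _ 2%:R); first by rewrite pnatr_eq0.
rewrite scaler_nat mulr2n hE // eqxx mulr1 scale_scalar_mx; congr _%:M.
by rewrite !rmorphM !rmorphN !rmorph_nat mulrN mulNr.
Qed.

Lemma cliff_sqr_gt0 a : (a < n)%N -> (0 < a)%N -> E a *m E a = - 1%:M.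
Proof.
by move=> an a_gt0; rewrite cliff_sqr // /eps gtn_eqF // rmorphN raddfN.
Qed.

Hypothesis n_gt1 : (1 < n)%N.
(* Clifford multiplication by the parallel null field V = d_t. *)
Local Notation A := (E 1 - E 0).

Let n_gt0 : (0 < n)%N. Proof. exact: ltn_trans n_gt1. Qed.

Lemma nullgen_sqr : A *m A = 0.
Proof.
rewrite mulmxBl !mulmxBr (cliff_sqr_gt0 n_gt1) // (cliff_sqr n_gt0) /eps eqxx.
rewrite (cliff_anticomm n_gt0 n_gt1) // opprK rmorph1.
by rewrite opprB opprK addrACA !addNr addr0.
Qed.

Lemma nullgen_anticomm0 : A *m E 0 + E 0 *m A = (-2)%:M.
Proof.
rewrite mulmxBl mulmxBr addrACA -opprD !hE //= -raddfB /= /eps /=.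
by rewrite mulr0 mulr1 mulrN1 opprK rmorph0 sub0r rmorph_nat.
Qed.

Lemma mxrank_ker_nullgen : \rank (kermx A^T) = (spin_dim n %/ 2)%N.
Proof.
have two_neq0 : (-2 : R[i]) != 0 by rewrite oppr_eq0 pnatr_eq0.
have := mxrank_sqr0_anticomm two_neq0 nullgen_sqr nullgen_anticomm0.
rewrite mxrank_ker mxrank_tr; move: (\rank A) => r <-.
by rewrite -addnn addnK addnn -muln2 mulnK.
Qed.

Lemma nullgen_anticomm_ge2 b : (2 <= b < n)%N -> A *m E b = - (E b *m A).
Proof.
case/andP=> b_ge2 bn; have b_gt0 : (0 < b)%N by exact: ltnW.
rewrite mulmxBl mulmxBr (cliff_anticomm n_gt1) ?neq_ltn ?b_ge2 //.
by rewrite (cliff_anticomm n_gt0) ?neq_ltn ?b_gt0 // opprK opprB addrC.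
Qed.

Lemma nullgen_mul_ge2_eq0 b (psi : 'cV[R[i]]_(spin_dim n)) : (2 <= b < n)%N ->
  (A *m E b *m psi == 0) = (A *m psi == 0).
Proof.
move=> hb; have [b_gt0 bn] : (0 < b)%N /\ (b < n)%N by case/andP: hb => /ltnW.
rewrite nullgen_anticomm_ge2 // mulNmx oppr_eq0 -mulmxA.
apply/idP/idP => [/eqP Ebpsi0|/eqP->]; last by rewrite mulmx0.
rewrite -oppr_eq0 -[A *m psi]mul1mx -mulNmx -(cliff_sqr_gt0 bn b_gt0).
by rewrite -mulmxA Ebpsi0 mulmx0.
Qed.
End CliffordGenerators.

Section DirectionalDerivatives.
Variables (R : realType) (V : normedModType R).

Lemma derive_quadratic (f : V -> R) (p v : V) (B C : R) :
  (forall h : R, f (h *: v + p) = f p + h * B + h ^+ 2 * C) -> 'D_v f p = B.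
Proof.
move=> f_quad; rewrite /derive; apply: cvg_lim => //.
apply: (@cvg_trans _ ((fun h : R => B + h * C) @ 0^')).
  apply: near_eq_cvg; near=> h.
  have h_neq0 : h != 0 by near: h; exact: nbhs_dnbhs_neq.
  by rewrite /= f_quad -[_ *: _]/(_ * _); field.
apply: cvg_within_filter.
suff : (fun h : R => B + h * C) @ 0 --> B + 0 * C by rewrite mul0r addr0.
by apply: cvgD; [exact: cvg_cst | apply: cvgM; [exact: cvg_id | exact: cvg_cst]].
Unshelve. all: by end_near.
Qed.

Lemma derive_shift_congr (f g : V -> R) (p q v : V) :
  (forall h : R, f (h *: v + p) = g (h *: v + q)) -> 'D_v f p = 'D_v g q.
Proof.
move=> fg; have fg0 : f p = g q by have := fg 0; rewrite !scale0r !add0r.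
rewrite /derive.
suff -> : (fun h : R => h^-1 *: ((f \o shift p) (h *: v) - f p)) =
          (fun h : R => h^-1 *: ((g \o shift q) (h *: v) - g q)) by [].
by apply/funext => h /=; rewrite fg fg0.
Qed.

Lemma derive_eq0_shift (f : V -> R) (X : V) :
  (forall q, differentiable f q) -> (forall q, 'D_X f q = 0) ->
  forall p, f (p + X) = f p.
Proof.
move=> f_diff DXf0 p; pose g t := f (t *: X + p).
have shiftE t : (fun s : R => s^-1 *: ((g \o shift t) (s *: 1) - g t)) =
    (fun s : R => s^-1 *: ((f \o shift (t *: X + p)) (s *: X) - f (t *: X + p))).
  by apply/funext => s; rewrite /g /= -[s *: 1]/(s * 1) mulr1 scalerDl addrA.
have g'0 (t : R) : is_derive t (1 : R) g 0.
  split; last by rewrite /derive shiftE -/(derive f _ X) DXf0.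
  have := @diff_derivable _ _ _ _ _ X (f_diff (t *: X + p)).
  by rewrite /derivable -shiftE.
by have := is_derive_0_is_cst 1 0 g'0; rewrite /g scale1r scale0r add0r addrC.
Qed.

End DirectionalDerivatives.

Lemma sum_delta (V : zmodType) m (F : nat -> V) c :
  \sum_(r < m) (if (r : nat) == c then F r else 0) = if (c < m)%N then F c else 0.
Proof. by rewrite -big_mkcond big_ord1_eq. Qed.

Section Coordinates.
Variables (R : realType) (n : nat).
Local Notation pt := 'rV[R]_n.
Local Notation e := (ucoord R n).

Lemma coord_atD (u v : pt) k : coord_at (u + v) k = coord_at u k + coord_at v k.
Proof. by rewrite /coord_at; case: insubP => [i _ _|_]; rewrite ?mxE ?addr0. Qed.

Lemma coord_atZ (c : R) (v : pt) k : coord_at (c *: v) k = c * coord_at v k.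
Proof. by rewrite /coord_at; case: insubP => [i _ _|_]; rewrite ?mxE ?mulr0. Qed.

Lemma coord_atN (v : pt) k : coord_at (- v) k = - coord_at v k.
Proof. by rewrite -scaleN1r coord_atZ mulN1r. Qed.

Lemma coord_atB (u v : pt) k : coord_at (u - v) k = coord_at u k - coord_at v k.
Proof. by rewrite coord_atD coord_atN. Qed.

Lemma coord_at_ord (v : pt) (i : 'I_n) : coord_at v i = v ord0 i.
Proof. by rewrite /coord_at valK. Qed.

Lemma coord_at_ucoord r k :
  coord_at (e r) k = if (k < n)%N && (k == r) then 1 else 0.
Proof. by rewrite /coord_at; case: insubP => [i -> <-|/negPf ->] //=; rewrite mxE. Qed.

Lemma coord_at_expand (v : pt) k :
  coord_at v k = \sum_(r < n) v ord0 r * coord_at (e r) k.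
Proof.
case: (ltnP k n) => kn.
  under eq_bigr => r _ do
    rewrite coord_at_ucoord kn eq_sym -mulrb mulr_natr mulrb -coord_at_ord.
  by rewrite sum_delta kn.
rewrite {1}/coord_at insubN -?ltnNge //.
by rewrite big1 // => r _; rewrite coord_at_ucoord ltnNge kn mulr0.
Qed.

Lemma sum_coord0 (v : pt) : (0 < n)%N ->
  \sum_(k < n) v ord0 k * ((k : nat) == 0%N)%:R = coord_at v 0.
Proof.
move=> n_gt0; under eq_bigr => k _ do rewrite -coord_at_ord mulr_natr mulrb.
by rewrite sum_delta n_gt0.
Qed.

End Coordinates.

Section QuadraticPotential.
Variables (R : realType) (n : nat) (lam : 'I_(n - 2) -> R).
Local Notation pt := 'rV[R]_n.
Local Notation e := (ucoord R n).

Definition dquadf (p v : pt) : R :=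
  \sum_(j < n - 2) lam j * (2 * coord_at p j.+2 * coord_at v j.+2).

Lemma dquadfC p v : dquadf p v = dquadf v p.
Proof. by apply: eq_bigr => j _; ring. Qed.

Lemma dquadfD p u v : dquadf p (u + v) = dquadf p u + dquadf p v.
Proof.
by rewrite /dquadf -big_split /=; apply: eq_bigr => j _; rewrite coord_atD; ring.
Qed.

Lemma dquadfZ p c v : dquadf p (c *: v) = c * dquadf p v.
Proof. by rewrite /dquadf mulr_sumr; apply: eq_bigr => j _; rewrite coord_atZ; ring. Qed.

Lemma dquadfN p v : dquadf p (- v) = - dquadf p v.
Proof. by rewrite -scaleN1r dquadfZ mulN1r. Qed.

Lemma dquadfDl p u v : dquadf (p + u) v = dquadf p v + dquadf u v.
Proof. by rewrite dquadfC dquadfD !(dquadfC _ v). Qed.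

Lemma dquadf_expand p v : dquadf p v = \sum_(r < n) v ord0 r * dquadf p (e r).
Proof.
rewrite /dquadf; under eq_bigr => j _ do rewrite (coord_at_expand v) !mulr_sumr.
rewrite exchange_big; apply: eq_bigr => r _; rewrite mulr_sumr.
by apply: eq_bigr => j _; ring.
Qed.

Lemma dquadf_ucoord01 p r : (r <= 1)%N -> dquadf p (e r) = 0.
Proof.
move=> r_le1; rewrite /dquadf big1 // => j _; rewrite coord_at_ucoord.
by case: eqP r_le1 => [<-|_]; rewrite ?andbF ?mulr0.
Qed.

Lemma dquadf_ucoord2 (j0 : 'I_(n - 2)) b : val j0 = 0%N ->
  dquadf (e 2) (e b) = (b == 2%N)%:R * (2 * lam j0).
Proof.
move=> j00; have n_gt2 : (2 < n)%N.
  by case: j0 j00 => j /= + j0; rewrite j0 subn_gt0.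
rewrite /dquadf (bigD1 j0) //= big1 => [|j j_neq_j0]; last first.
  have j_neq0 : (j : nat) != 0%N.
    by apply: contraNneq j_neq_j0 => j_eq0; apply/eqP/val_inj; rewrite /= j_eq0 j00.
  by rewrite coord_at_ucoord !eqSS (negPf j_neq0) andbF mulr0 mul0r mulr0.
have -> : j0.+2 = 2%N by rewrite j00.
rewrite !coord_at_ucoord n_gt2 eq_sym /= addr0 mulr1.
by case: (b == 2%N); rewrite /= ?mulr0 ?mulr1 ?mul1r ?mul0r // mulrC.
Qed.

Lemma quadf_line (p v : pt) (h : R) :
  quadf lam (h *: v + p) = quadf lam p + h * dquadf p v + h ^+ 2 * quadf lam v.
Proof.
rewrite /quadf /dquadf !mulr_sumr -!big_split /=; apply: eq_bigr => j _.
by rewrite coord_atD coord_atZ; ring.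
Qed.

Lemma derive_quadf v p : 'D_v (quadf lam) p = dquadf p v.
Proof. by apply: (derive_quadratic (C := quadf lam v)) => h; rewrite quadf_line. Qed.

End QuadraticPotential.

Lemma sum3_koszul (I : finType) (K : comRingType) (a b c d e : I -> K) :
  \sum_r (\sum_k \sum_l a k * b l *
            (e l * e r * d k + e k * e r * d l - e k * e l * d r)) * c r
  = (\sum_k a k * d k) * (\sum_l b l * e l) * (\sum_r c r * e r)
  + (\sum_k a k * e k) * (\sum_l b l * d l) * (\sum_r c r * e r)
  - (\sum_k a k * e k) * (\sum_l b l * e l) * (\sum_r c r * d r).
Proof.
have sum3 (f g h : I -> K) : (\sum_k f k) * (\sum_l g l) * (\sum_r h r) =
    \sum_r \sum_k \sum_l f k * g l * h r.
  rewrite mulr_sumr; apply: eq_bigr => r _; rewrite big_distrl /= mulr_suml.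
  by apply: eq_bigr => k _; rewrite mulr_sumr mulr_suml.
rewrite !sum3 -big_split -sumrB /=; apply: eq_bigr => r _.
rewrite mulr_suml -big_split -sumrB /=; apply: eq_bigr => k _.
by rewrite mulr_suml -big_split -sumrB /=; apply: eq_bigr => l _; ring.
Qed.

Section Metric.
Variables (R : realType) (n : nat) (lam : 'I_(n - 2) -> R).
Local Notation pt := 'rV[R]_n.
Local Notation e := (ucoord R n).

Lemma gcoef_sym p k l : gcoef lam p k l = gcoef lam p l k.
Proof.
rewrite /gcoef; case: (eqVneq k l) => [->//|k_neq_l]; rewrite !andbF.
by case: (k == 0%N); case: (l == 0%N); case: (k == 1%N); case: (l == 1%N).
Qed.

Lemma gmx_sym p : (gmx lam p)^T = gmx lam p.
Proof. by apply/matrixP => i j; rewrite !mxE gcoef_sym. Qed.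

Lemma pder_gcoef k l r p :
  pder k (fun q => gcoef lam q l r) p =
  if (l == 0%N) && (r == 0%N) then dquadf lam p (e k) else 0.
Proof.
rewrite /pder /gcoef; case: ((l == 0%N) && (r == 0%N)); first exact: derive_quadf.
by apply: (derive_quadratic (C := 0)) => h; rewrite !mulr0 !addr0.
Qed.

Hypothesis n_gt2 : (2 < n)%N.
Let n_gt0 : (0 < n)%N. Proof. exact: ltn_trans n_gt2. Qed.
Let n_gt1 : (1 < n)%N. Proof. exact: ltn_trans n_gt2. Qed.

Lemma sum_gcoef p (h : nat -> R) k : (k < n)%N ->
  \sum_(r < n) gcoef lam p k r * h r =
  if k == 0%N then quadf lam p * h 0%N + h 1%N
  else if k == 1%N then h 0%N else h k.
Proof.
move=> kn; rewrite /gcoef; case: ifP => [/eqP ->|k_neq0].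
  have := sum_delta n (fun r => quadf lam p * h r) 0; rewrite n_gt0 => <-.
  have := sum_delta n h 1; rewrite n_gt1 => <-.
  rewrite -big_split /=; apply: eq_bigr => r _.
  case: (eqVneq (r : nat) 0%N) => [->|r_neq0] /=; first by rewrite addr0.
  by case: (eqVneq (r : nat) 1%N) => [->|r_neq1] /=; rewrite ?(mul1r, mul0r, add0r).
case: ifP => [/eqP ->|k_neq1].
  have := sum_delta n h 0; rewrite n_gt0 => <-; apply: eq_bigr => r _.
  by case: (eqVneq (r : nat) 0%N) => [->|r_neq0] /=; rewrite ?(mul1r, mul0r).
have := sum_delta n h k; rewrite kn => <-; apply: eq_bigr => r _.
have k_ge2 : (2 <= k)%N by case: k k_neq0 k_neq1 {kn} => [|[]].
by rewrite k_ge2 /= eq_sym; case: eqP; rewrite ?(mul1r, mul0r).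
Qed.

Lemma trmx_invmx_gmx p : (invmx (gmx lam p))^T *m gmx lam p = 1%:M.
Proof.
pose ginv (r l : nat) : R :=
  if r == 0%N then (l == 1%N)%:R
  else if r == 1%N then (l == 0%N)%:R - quadf lam p * (l == 1%N)%:R
  else (r == l)%:R.
have gmx_unit : gmx lam p \in unitmx.
  suff /mulmx1_unit[] : gmx lam p *m \matrix_(r, l) ginv r l = 1%:M by [].
  apply/matrixP => k l; rewrite !mxE; under eq_bigr => r _ do rewrite !mxE.
  rewrite (sum_gcoef p (ginv^~ l)) // /ginv -val_eqE /=.
  by case: k => [[|[|k]] kn] //=; rewrite (eq_sym _ (l : nat)) // addrC subrK.
by rewrite trmx_inv gmx_sym mulVmx.
Qed.

(* Twice the Christoffel symbol of the first kind. *)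
Definition christoffel1 (k l r : 'I_n) (p : pt) : R :=
  pder k (fun q => gcoef lam q l r) p + pder l (fun q => gcoef lam q k r) p
  - pder r (fun q => gcoef lam q k l) p.

Lemma sum_christoffel1 (X Y w : pt) p :
  \sum_(r < n) (\sum_(k < n) \sum_(l < n) X ord0 k * Y ord0 l * christoffel1 k l r p)
                * w ord0 r
  = dquadf lam p X * coord_at Y 0 * coord_at w 0
    + coord_at X 0 * dquadf lam p Y * coord_at w 0
    - coord_at X 0 * coord_at Y 0 * dquadf lam p w.
Proof.
pose d (i : 'I_n) := dquadf lam p (e i); pose z (i : 'I_n) := ((i : nat) == 0%N)%:R : R.
have pder_gcoefE (k l r : 'I_n) :
    pder k (fun q => gcoef lam q l r) p = z l * z r * d k.
  by rewrite pder_gcoef /z /d; case: eqP; case: eqP; rewrite ?mul1r ?mul0r.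
under eq_bigr => r _ do under eq_bigr => k _ do under eq_bigr => l _ do
  rewrite /christoffel1 !pder_gcoefE.
rewrite (sum3_koszul (fun k => X ord0 k) (fun l => Y ord0 l) (fun r => w ord0 r) d z).
by rewrite /z /d !sum_coord0 // -!dquadf_expand.
Qed.

Definition christoffel_row (X Y p : pt) : pt :=
  \row_r \sum_(k < n) \sum_(l < n) X ord0 k * Y ord0 l * christoffel1 k l r p.

Lemma lc_nablaE X (Y : pt -> pt) p :
  lc_nabla lam X Y p = \row_m 'D_X (fun q => Y q ord0 m) p
     + 2^-1 *: (christoffel_row X (Y p) p *m (invmx (gmx lam p))^T).
Proof.
apply/matrixP => i m; rewrite !mxE; congr (_ + _).
transitivity (\sum_r \sum_k \sum_l X ord0 k * Y p ord0 l *
    (2^-1 * (invmx (gmx lam p) m r * christoffel1 k l r p))).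
  rewrite [RHS]exchange_big; apply: eq_bigr => k _; rewrite [RHS]exchange_big.
  by apply: eq_bigr => l _; rewrite /christoffel !mulr_sumr.
rewrite mulr_sumr; apply: eq_bigr => r _; rewrite !mxE mulr_suml mulr_sumr.
apply: eq_bigr => k _; rewrite mulr_suml mulr_sumr.
by apply: eq_bigr => l _; ring.
Qed.

Lemma gdotDl p u v w : gdot lam p (u + v) w = gdot lam p u w + gdot lam p v w.
Proof. by rewrite /gdot !mulmxDl mxE. Qed.

Lemma gdotZl p c u w : gdot lam p (c *: u) w = c * gdot lam p u w.
Proof. by rewrite /gdot -!scalemxAl mxE. Qed.

Lemma gdot0l p w : gdot lam p 0 w = 0.
Proof. by rewrite /gdot !mul0mx mxE. Qed.

Lemma gdot_trmx_invmx p (W w : pt) :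
  gdot lam p (W *m (invmx (gmx lam p))^T) w = \sum_r W ord0 r * w ord0 r.
Proof.
rewrite /gdot -(mulmxA W) trmx_invmx_gmx mulmx1 mxE.
by apply: eq_bigr => r _; rewrite mxE.
Qed.

Lemma gdot_ucoord1 p w : gdot lam p (e 1) w = coord_at w 0.
Proof.
rewrite /gdot; have -> : e 1 *m gmx lam p = e 0.
  apply/matrixP => i l; rewrite !mxE.
  under eq_bigr => m _ do rewrite !mxE gcoef_sym mulrC.
  rewrite (sum_gcoef p (fun m => if m == 1%N then 1 else 0)) //=.
  by case: ifP => _; [rewrite mulr0 add0r | case: (_ == 1%N)].
rewrite mxE; under eq_bigr => m _ do
  rewrite !mxE -coord_at_ord mulrC -mulrb mulr_natr mulrb.
by rewrite sum_delta n_gt0.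
Qed.

Lemma gdot_lc_nabla X (Y : pt -> pt) p w :
  gdot lam p (lc_nabla lam X Y p) w =
  gdot lam p (\row_m 'D_X (fun q => Y q ord0 m) p) w
  + 2^-1 * (dquadf lam p X * coord_at (Y p) 0 * coord_at w 0
            + coord_at X 0 * dquadf lam p (Y p) * coord_at w 0
            - coord_at X 0 * coord_at (Y p) 0 * dquadf lam p w).
Proof.
rewrite lc_nablaE gdotDl gdotZl gdot_trmx_invmx -sum_christoffel1.
by congr (_ + _ * _); apply: eq_bigr => r _; rewrite mxE.
Qed.

Lemma frame_le1 a p : (a <= 1)%N ->
  frame lam a p = e 0 - (2^-1 * (quadf lam p + (-1) ^+ a)) *: e 1.
Proof. by case: a => [|[|a]] // _; rewrite /frame /= ?expr0 ?expr1. Qed.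

Lemma frame_gt1 a p : (1 < a)%N -> frame lam a p = e a.
Proof. by case: a => [|[|a]]. Qed.

Lemma coord_at_frame0 a p : coord_at (frame lam a p) 0 = if (a <= 1)%N then 1 else 0.
Proof.
case: leqP => [a_le1|]; last first.
  by case: a => [|[|a]] // _; rewrite frame_gt1 // coord_at_ucoord andbF.
by rewrite frame_le1 // coord_atB coord_atZ !coord_at_ucoord n_gt0 /= mulr0 subr0.
Qed.

Lemma dquadf_frame a p q : dquadf lam q (frame lam a p) = dquadf lam q (e a).
Proof.
case: (leqP a 1) => [a_le1|a_gt1]; last by rewrite frame_gt1.
by rewrite frame_le1 // dquadfD dquadfN dquadfZ !dquadf_ucoord01 // mulr0 subr0.
Qed.

Lemma derive_frame_le1 X a p : (a <= 1)%N ->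
  \row_m 'D_X (fun q => frame lam a q ord0 m) p = - (2^-1 * dquadf lam p X) *: e 1.
Proof.
move=> a_le1; apply/matrixP => i m; rewrite !mxE.
under eq_fun => q do rewrite frame_le1 // !mxE.
apply: (derive_quadratic (C := - (2^-1 * quadf lam X) * e 1 ord0 m)) => h.
by rewrite quadf_line !mxE; ring.
Qed.

Lemma derive_frame_gt1 X a p : (1 < a)%N ->
  \row_m 'D_X (fun q => frame lam a q ord0 m) p = 0.
Proof.
move=> a_gt1; apply/matrixP => i m; rewrite !mxE.
by apply: (derive_quadratic (C := 0)) => h; rewrite !frame_gt1 //; ring.
Qed.

Lemma conn_coefE X a b p : (a < b)%N -> (b < n)%N ->
  conn_coef lam X a b p =
  if (a <= 1)%N then - (2^-1 * coord_at X 0 * dquadf lam p (e b)) else 0.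
Proof.
move=> ab bn; rewrite /conn_coef gdot_lc_nabla !coord_at_frame0 !dquadf_frame.
case: leqP => [a_le1|a_gt1].
  rewrite derive_frame_le1 // gdotZl gdot_ucoord1 coord_at_frame0.
  by rewrite dquadf_ucoord01 //; ring.
rewrite derive_frame_gt1 // gdot0l leqNgt (ltn_trans a_gt1 ab) /=; ring.
Qed.
End Metric.

Lemma big_ord_first2 (V : zmodType) m (G : 'I_m -> V) (i0 i1 : 'I_m) :
  val i0 = 0%N -> val i1 = 1%N -> (forall a : 'I_m, (1 < a)%N -> G a = 0) ->
  \sum_a G a = G i0 + G i1.
Proof.
move=> i00 i11 G_eq0; have i1_neq_i0 : i1 != i0 by rewrite -val_eqE i00 i11.
rewrite (bigD1 i0) //= (bigD1 i1) //= big1 ?addr0 // => a /andP[a_neq_i1 a_neq_i0].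
by apply: G_eq0; move: a_neq_i1 a_neq_i0; rewrite -!val_eqE i00 i11; case: a => [[|[]]].
Qed.

Section SpinorConnection.
Variables (R : realType) (n : nat) (lam : 'I_(n - 2) -> R).
Variable E : nat -> 'M[R[i]]_(spin_dim n).
Local Notation pt := 'rV[R]_n.
Local Notation spinor := 'cV[R[i]]_(spin_dim n).
Local Notation e := (ucoord R n).
Local Notation A := (E 1 - E 0).

Definition spin_conn (X p : pt) (psi : spinor) : spinor :=
  \sum_(a < n) \sum_(b < n | (a < b)%N)
     (2^-1 * eps R a * eps R b * conn_coef lam X a b p)%:C *: (E a *m E b *m psi).

Lemma spinor_nablaE X phi p :
  spinor_nabla lam E X phi p = spinor_dir X phi p + spin_conn X p (phi p).
Proof. by []. Qed.

Hypothesis n_gt2 : (2 < n)%N.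
Let n_gt0 : (0 < n)%N. Proof. exact: ltn_trans n_gt2. Qed.
Let n_gt1 : (1 < n)%N. Proof. exact: ltn_trans n_gt2. Qed.

Lemma spin_connE X p psi :
  spin_conn X p psi = (- (2^-1 * 2^-1 * coord_at X 0))%:C *:
     \sum_(b < n) (dquadf lam p (e b))%:C *: (A *m E b *m psi).
Proof.
rewrite /spin_conn.
under eq_bigr => a _ do under eq_bigr => b ab do rewrite conn_coefE //.
rewrite (@big_ord_first2 _ _ _ (Ordinal n_gt0) (Ordinal n_gt1)) //=; last first.
  move=> a a_gt1; rewrite big1 // => b _.
  by rewrite leqNgt a_gt1 mulr0 rmorph0 scale0r.
rewrite [X in X + _]big_mkcond [X in _ + X]big_mkcond scaler_sumr -big_split /=.
apply: eq_bigr => b _; case: (leqP b 1) => [b_le1|b_gt1].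
  by rewrite dquadf_ucoord01 // !(mulr0, oppr0, rmorph0, scale0r, scaler0) if_same addr0.
have b_gt0 : (0 < b)%N by exact: ltnW.
rewrite b_gt0 /eps /= (gtn_eqF b_gt0).
rewrite !mulmxBl [RHS]scalerA -rmorphM scalerBr addrC; congr (_ + _).
  by congr (_ *: _); congr _%:C; ring.
by rewrite -scaleNr -rmorphN; congr (_ *: _); congr _%:C; ring.
Qed.

Lemma spin_conn_s0 X p psi : coord_at X 0 = 0 -> spin_conn X p psi = 0.
Proof. by move=> Xs0; rewrite spin_connE Xs0 mulr0 oppr0 rmorph0 scale0r. Qed.

Hypothesis hE : clifford_rep E.

Lemma spin_conn_null X p psi : A *m psi = 0 -> spin_conn X p psi = 0.
Proof.
move=> Apsi0; rewrite spin_connE big1 ?scaler0 // => b _.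
case: (leqP b 1) => [b_le1|b_gt1]; first by rewrite dquadf_ucoord01 // rmorph0 scale0r.
have /eqP-> : A *m E b *m psi == 0.
  by rewrite (nullgen_mul_ge2_eq0 hE n_gt1) ?b_gt1 ?ltn_ord // Apsi0.
by rewrite scaler0.
Qed.

Lemma null_of_spin_conn_shift_x1 (j0 : 'I_(n - 2)) p psi :
  val j0 = 0%N -> lam j0 != 0 ->
  spin_conn (e 0) (p + e 2) psi = spin_conn (e 0) p psi -> A *m psi = 0.
Proof.
move=> j00 lam_j0 conn_eq; apply/eqP.
rewrite -(nullgen_mul_ge2_eq0 hE n_gt1 (b := 2)) ?n_gt2 //.
have sum_e2 : \sum_(b < n) (dquadf lam (e 2) (e b))%:C *: (A *m E b *m psi) =
    (2 * lam j0)%:C *: (A *m E 2 *m psi).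
  under eq_bigr => b _ do
    rewrite (dquadf_ucoord2 _ _ j00) mulr_natl mulrb (fun_if (fun x => x%:C)) rmorph0
      (fun_if (fun c => c *: _)) scale0r.
  by rewrite (sum_delta n (fun b => (2 * lam j0)%:C *: (A *m E b *m psi))) n_gt2.
move: conn_eq; rewrite !spin_connE coord_at_ucoord n_gt0 /= mulr1.
under eq_bigr => b _ do rewrite dquadfDl rmorphD scalerDl.
rewrite big_split /= sum_e2 scalerDr -[RHS]addr0 => /addrI/eqP.
by rewrite !scalemx_eq0 !fmorph_eq0 oppr_eq0 !mulf_eq0 !invr_eq0 (negPf lam_j0) pnatr_eq0.
Qed.
End SpinorConnection.

Section SpinorFields.
Variables (R : realType) (n : nat).
Local Notation pt := 'rV[R]_n.
Local Notation spinor := 'cV[R[i]]_(spin_dim n).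

Lemma complexI (z w : R[i]) : cRe z = cRe w -> cIm z = cIm w -> z = w.
Proof. by case: z => a b; case: w => c d /= -> ->. Qed.

Lemma spinor_dir_eq0 X (phi : pt -> spinor) p r : spinor_dir X phi p = 0 ->
  'D_X (fun q => cRe (phi q r ord0)) p = 0 /\ 'D_X (fun q => cIm (phi q r ord0)) p = 0.
Proof.
move/matrixP/(_ r ord0)/eqP; rewrite !mxE eq_complex /= => /andP[/eqP ReD /eqP ImD].
by split; lra.
Qed.

Lemma spinor_dir_cst (v : spinor) X p : spinor_dir X (fun _ => v) p = 0.
Proof. by apply/matrixP => r c; rewrite !mxE !derive_cst mulr0 addr0. Qed.

Lemma spinor_dir_shift_congr (phi : pt -> spinor) X p q :
  (forall h : R, phi (h *: X + p) = phi (h *: X + q)) ->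
  spinor_dir X phi p = spinor_dir X phi q.
Proof.
move=> phi_pq; apply/matrixP => r c; rewrite !mxE.
by congr (_%:C + 'i * _%:C); apply: derive_shift_congr => h; rewrite phi_pq.
Qed.

Lemma smooth_spinor_shift (phi : pt -> spinor) X : smooth_spinor phi ->
  (forall q, spinor_dir X phi q = 0) -> forall p, phi (p + X) = phi p.
Proof.
move=> phi_smooth DXphi0 p; apply/matrixP => r c; rewrite [c]ord1.
have [smooth_re smooth_im] := phi_smooth r.
apply: complexI.
  apply: (derive_eq0_shift (f := fun q => cRe (phi q r ord0))) => q.
    exact: smooth_re [::] q.
  by have [] := spinor_dir_eq0 r (DXphi0 q).
apply: (derive_eq0_shift (f := fun q => cIm (phi q r ord0))) => q.
  exact: smooth_im [::] q.
by have [] := spinor_dir_eq0 r (DXphi0 q).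
Qed.

End SpinorFields.

Section ParallelSpinors.
Variables (R : realType) (n : nat) (lam : 'I_(n - 2) -> R).
Variable E : nat -> 'M[R[i]]_(spin_dim n).
Hypotheses (n_gt2 : (2 < n)%N) (hE : clifford_rep E).
Local Notation pt := 'rV[R]_n.
Local Notation spinor := 'cV[R[i]]_(spin_dim n).
Local Notation e := (ucoord R n).
Local Notation A := (E 1 - E 0).

Lemma parallel_spinor_cst (v : spinor) : A *m v = 0 -> parallel_spinor lam E (fun _ => v).
Proof. by move=> Av0 p X; rewrite spinor_nablaE spinor_dir_cst add0r spin_conn_null. Qed.

Hypothesis lam_neq0 : forall j, lam j != 0.
Variable phi : pt -> spinor.
Hypotheses (phi_smooth : smooth_spinor phi) (phi_par : parallel_spinor lam E phi).

Lemma parallel_spinor_dir X p : spinor_dir X phi p = - spin_conn lam E X p (phi p).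
Proof. by apply/eqP; rewrite -addr_eq0 -spinor_nablaE phi_par. Qed.

Lemma parallel_spinor_shift_s0 p X : coord_at X 0 = 0 -> phi (p + X) = phi p.
Proof.
move=> Xs0; apply: smooth_spinor_shift => // q.
by rewrite parallel_spinor_dir spin_conn_s0 ?oppr0.
Qed.

Lemma parallel_spinor_null p : A *m phi p = 0.
Proof.
have n2_gt0 : (0 < n - 2)%N by rewrite subn_gt0.
have e2_s0 : coord_at (e 2) 0 = 0 by rewrite coord_at_ucoord andbF.
apply: (@null_of_spin_conn_shift_x1 _ _ _ _ n_gt2 hE (Ordinal n2_gt0) p) => //.
rewrite -{1}(parallel_spinor_shift_s0 p e2_s0); apply: oppr_inj.
rewrite -!parallel_spinor_dir; apply: spinor_dir_shift_congr => h.
by rewrite addrA parallel_spinor_shift_s0.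
Qed.

Lemma parallel_spinor_const p : phi p = phi 0.
Proof.
rewrite -[p]add0r; apply: smooth_spinor_shift => // q.
by rewrite parallel_spinor_dir spin_conn_null ?oppr0 // parallel_spinor_null.
Qed.

End ParallelSpinors.

Unset Implicit Arguments.

Theorem proposition5 (R : realType) (n : nat) (lam : 'I_(n - 2) -> R)
    (E : nat -> 'M[R[i]]_(spin_dim n))
    (hn : (3 <= n)%N) (hlam : forall j, lam j != 0)
    (hE : clifford_rep E) :
  (forall phi : 'rV[R]_n -> 'cV[R[i]]_(spin_dim n),
     smooth_spinor phi ->
     (parallel_spinor lam E phi <->
      exists v : 'cV[R[i]]_(spin_dim n),
        (E 1%N - E 0%N) *m v = 0 /\ forall p, phi p = v)) /\
  \rank (kermx (E 1%N - E 0%N)^T) = (spin_dim n %/ 2)%N.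
Proof.
split; last exact: mxrank_ker_nullgen hE (ltnW hn).
move=> phi phi_smooth; split=> [phi_par|[v [Av0 phiE]]]; last first.
  by rewrite (funext phiE); exact: parallel_spinor_cst.
have phi_null := parallel_spinor_null hn hE hlam phi_smooth phi_par.
have phi_const := parallel_spinor_const hn hE hlam phi_smooth phi_par.
by exists (phi 0).
Qed.
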